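(* Let $H_0$ be an admissible Hamiltonian with vector field $f$, let $g=J\nabla K_0$ be associated to $f$ via $B$ (so $\nabla K_0=B\nabla H_0$), and let $\widetilde H_0(x,\varepsilon)=x^T\mathcal H\big(I-\varepsilon^2(J(x)\mathcal H)^2\big)^{-1}x$ and $\widetilde K_0(x,\varepsilon)=x^T\mathcal K\big(I-\varepsilon^2(J(x)\mathcal K)^2\big)^{-1}x$, where $\mathcal H=\nabla^2H_0$, $\mathcal K=\nabla^2K_0=B\mathcal H$. Then $$\nabla_x\widetilde K_0(x,\varepsilon)=B\,\nabla_x\widetilde H_0(x,\varepsilon),$$ and consequently $A\,\nabla_x^2\widetilde H_0(x,\varepsilon)=\nabla_x^2\widetilde H_0(x,\varepsilon)\,A^T$ and $A\,\nabla_x^2\widetilde K_0(x,\varepsilon)=\nabla_x^2\widetilde K_0(x,\varepsilon)\,A^T$ wherever defined.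
   Context: Fix an integer $n\ge 2$. Points of $\mathbb R^{2n}$ are $x=(x_1,\dots,x_{2n})^{T}$; write $u=(x_1,\dots,x_n)^T$. Let $X(u)$ be the $n\times n$ matrix with entries $X(u)_{ij}=x_{k}$ where $k\in\{1,\dots,n\}$, $k\equiv i+j-1 \pmod n$, and let $J(x)=\begin{pmatrix}0&X(u)\\-X(u)&0\end{pmatrix}$ (a skew-symmetric $2n\times 2n$ matrix depending linearly on $x$). Let $\mathcal P$ be the $n\times n$ cyclic shift matrix ($\mathcal P_{i,i+1}=1$ for $1\le i\le n-1$, $\mathcal P_{n,1}=1$, all other entries $0$) and $A=\begin{pmatrix}\mathcal P&0\\0&\mathcal P\end{pmatrix}$. An admissible Hamiltonian is a homogeneous quadratic form $H(x)=\tfrac12 x^T\mathcal H x$ with a constant symmetric matrix $\mathcal H=\nabla^2H$ satisfying $A\mathcal H=\mathcal H A^T$; its Hamiltonian vector field is $f(x)=J(x)\nabla H(x)$. Associated vector fields: let $B=\sum_{i=0}^{n-1}\alpha_iA^i$ with $\alpha_i\in\mathbb C$ and $B^2=I$. If $H$ is an admissible Hamiltonian with vector field $f$, put $K(x)=\tfrac12 x^T B\mathcal H x$ (so $\nabla K=B\nabla H$) and $g(x)=J(x)\nabla K(x)=B^Tf(x)$; $g$ is said to be associated to $f$ via $B$. (When $B$ is complex, everything is considered over $\mathbb C^{2n}$.) The functions $\widetilde H_0,\widetilde K_0$ in the claim coincide with the conserved quantities $(2\varepsilon)^{-1}x^TJ(\frac{x+\tilde x}{2})^{-1}\tilde x$,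 $\tilde x=\Phi_f(x,\varepsilon)$ (resp. with $g$) of the Kahan maps $\Phi_f(x,\varepsilon)=(I-\varepsilon f'(x))^{-1}x$, $\Phi_g$. *)

(* Scalars: an arbitrary numFieldType R (covers real-like and
   complex-like fields, e.g. algC); differentiability is the usual epsilon-delta
   (Frechet) notion w.r.t. the norm `|.| of R. *)
From HB Require Import structures.
From mathcomp Require Import all_boot all_order all_algebra.
Set Implicit Arguments. Unset Strict Implicit. Unset Printing Implicit Defensive.
Import Order.TTheory GRing.Theory Num.Theory.
Local Open Scope ring_scope.

Section Defs.
Variable R : numFieldType.
Variable n : nat.

(* X(u)_{ij} = x_k, k = i+j-1 mod n (1-indexed)  <=>  0-indexed k = (i+j) mod n *)
Definition ord_addmod (i j : 'I_n) : 'I_n :=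
  Ordinal (ltn_pmod (i + j) (leq_ltn_trans (leq0n i) (ltn_ord i))).

Definition Xmat (x : 'cV[R]_(n + n)) : 'M[R]_n :=
  \matrix_(i < n, j < n) x (lshift n (ord_addmod i j)) 0.

Definition Jmat (x : 'cV[R]_(n + n)) : 'M[R]_(n + n) :=
  block_mx 0 (Xmat x) (- Xmat x) 0.

Definition Pshift : 'M[R]_n :=
  \matrix_(i < n, j < n) (((j : nat) == (i.+1 %% n)%N)%:R : R).

Definition Amat : 'M[R]_(n + n) := block_mx Pshift 0 0 Pshift.

Definition vnorm (m : nat) (h : 'cV[R]_m) : R := \sum_i `|h i 0|.

Definition is_gradient (F : 'cV[R]_(n + n) -> R) (x g : 'cV[R]_(n + n)) : Prop :=
  forall e : R, 0 < e -> exists2 d : R, 0 < d &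
    forall h : 'cV[R]_(n + n), vnorm h < d ->
      `|F (x + h) - F x - (g^T *m h) 0 0| <= e * vnorm h.

Definition is_hessian (F : 'cV[R]_(n + n) -> R) (x : 'cV[R]_(n + n))
    (M : 'M[R]_(n + n)) : Prop :=
  exists2 d : R, 0 < d & exists G : 'cV[R]_(n + n) -> 'cV[R]_(n + n),
    (forall y, vnorm (y - x) < d -> is_gradient F y (G y)) /\
    (forall e : R, 0 < e -> exists2 d' : R, 0 < d' &
      forall h : 'cV[R]_(n + n), vnorm h < d' ->
        vnorm (G (x + h) - G x - M *m h) <= e * vnorm h).

Definition Dmat (S : 'M[R]_(n + n)) (x : 'cV[R]_(n + n)) (eps : R) :
  'M[R]_(n + n) := 1%:M - eps ^+ 2 *: ((Jmat x *m S) *m (Jmat x *m S)).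

Definition tildeF (S : 'M[R]_(n + n)) (eps : R) (x : 'cV[R]_(n + n)) : R :=
  (x^T *m S *m invmx (Dmat S x eps) *m x) 0 0.

End Defs.

From HB Require Import structures.
From mathcomp Require Import all_boot all_order all_algebra.
From mathcomp Require Import mpoly.
From mathcomp Require Import ring.
Set Implicit Arguments. Unset Strict Implicit. Unset Printing Implicit Defensive.
Import Order.TTheory GRing.Theory Num.Theory.
Local Open Scope ring_scope.

(* With S = C *m H and D(x) = I - eps^2 (J(x) S)^2, the gradient of x^T S D(x)^-1 x follows
   from the product rule and the derivative of D(x)^-1 x.  Every polynomial C in the cyclic
   shift A satisfies C H = H C^T, C^T J(z) = J(z) C and J(C^T z) = C^T J(z); these relations
   turn that gradient into C times the gradient for C = 1, and together with B^2 = 1 they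
   show that K and H have the same matrix D.  For the Hessians,
   the same identity with C replaced by A C shows that A M is again a Hessian; both M and A M
   are Hessians of rational functions, hence symmetric (mixed partial derivatives of P/Q
   commute and gradients are unique), so A M = (A M)^T = M A^T. *)

Lemma common_pos_lb (R : numFieldType) (d1 d2 : R) : 0 < d1 -> 0 < d2 ->
  exists2 d : R, 0 < d & d <= d1 /\ d <= d2.
Proof.
move=> d1_gt0 d2_gt0; exists (d1 * d2 / (d1 + d2)).
  by rewrite divr_gt0 ?mulr_gt0 ?addr_gt0.
have d12_gt0 : 0 < d1 + d2 by rewrite addr_gt0.
split; rewrite ler_pdivrMr //.
  by rewrite mulrDr lerDr mulr_ge0 // ltW.
by rewrite mulrDr mulrC lerDl mulr_ge0 // ltW.
Qed.

Section LittleO.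
Variables (R : numFieldType) (m : nat).
Implicit Types (g h : 'cV[R]_m) (r s : 'cV[R]_m -> R).

Lemma vnorm_ge0 h : 0 <= vnorm h.
Proof. by rewrite /vnorm sumr_ge0. Qed.

Lemma ler_coord_vnorm h i : `|h i 0| <= vnorm h.
Proof. by rewrite /vnorm (bigD1 i) //= lerDl sumr_ge0. Qed.

Lemma vnormD g h : vnorm (g + h) <= vnorm g + vnorm h.
Proof.
rewrite /vnorm -big_split /=; apply: ler_sum => i _; rewrite mxE; exact: ler_normD.
Qed.

Lemma vnormZ c h : vnorm (c *: h) = `|c| * vnorm h.
Proof. by rewrite /vnorm mulr_sumr; apply: eq_bigr => i _; rewrite mxE normrM. Qed.

Lemma vnorm0 : vnorm (0 : 'cV[R]_m) = 0.
Proof. by rewrite /vnorm big1 // => i _; rewrite mxE normr0. Qed.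

Lemma vnorm_delta (k : 'I_m) : vnorm (delta_mx k 0 : 'cV[R]_m) = 1.
Proof.
rewrite /vnorm (bigD1 k) //= big1 ?addr0 => [|i ik]; rewrite mxE.
  by rewrite !eqxx normr1.
by rewrite (negbTE ik) normr0.
Qed.

Definition dot g h : R := (g^T *m h) 0 0.

Lemma dotE g h : dot g h = \sum_i g i 0 * h i 0.
Proof. by rewrite /dot mxE; apply: eq_bigr => i _; rewrite mxE. Qed.

Lemma dotDl g g' h : dot (g + g') h = dot g h + dot g' h.
Proof. by rewrite !dotE -big_split; apply: eq_bigr => i _; rewrite mxE mulrDl. Qed.

Lemma dotBr g h h' : dot g (h - h') = dot g h - dot g h'.
Proof. by rewrite !dotE -sumrB; apply: eq_bigr => i _; rewrite !mxE mulrBr. Qed.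

Lemma dotZl c g h : dot (c *: g) h = c * dot g h.
Proof. by rewrite !dotE mulr_sumr; apply: eq_bigr => i _; rewrite mxE mulrA. Qed.

Lemma dotZr c g h : dot g (c *: h) = c * dot g h.
Proof. by rewrite !dotE mulr_sumr; apply: eq_bigr => i _; rewrite mxE mulrCA. Qed.

Lemma dotNl g h : dot (- g) h = - dot g h.
Proof. by rewrite -scaleN1r dotZl mulN1r. Qed.

Lemma dot0l h : dot 0 h = 0.
Proof. by rewrite dotE big1 // => i _; rewrite mxE mul0r. Qed.

Lemma dot_mulmxl (C : 'M[R]_m) g h : dot (C *m g) h = dot g (C^T *m h).
Proof. by rewrite /dot trmx_mul mulmxA. Qed.

Lemma dot_sumr (I : Type) (r : seq I) g (F : I -> 'cV[R]_m) :
  dot g (\sum_(i <- r) F i) = \sum_(i <- r) dot g (F i).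
Proof. by rewrite /dot mulmx_sumr summxE. Qed.

Lemma dot_deltar g (k : 'I_m) : dot g (delta_mx k 0) = g k 0.
Proof.
rewrite dotE (bigD1 k) //= big1 ?addr0 => [|i ik]; rewrite mxE.
  by rewrite !eqxx mulr1.
by rewrite (negbTE ik) mulr0.
Qed.

Lemma dot_deltal h (k : 'I_m) : dot (delta_mx k 0) h = h k 0.
Proof.
rewrite dotE (bigD1 k) //= big1 ?addr0 => [|i ik]; rewrite mxE.
  by rewrite !eqxx mul1r.
by rewrite (negbTE ik) mul0r.
Qed.

Lemma ler_norm_dot g h : `|dot g h| <= vnorm g * vnorm h.
Proof.
rewrite dotE /vnorm mulr_suml; apply: le_trans (ler_norm_sum _ _ _) _.
apply: ler_sum => i _; rewrite normrM ler_wpM2l //; exact: ler_coord_vnorm.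
Qed.

Definition near0 (P : 'cV[R]_m -> Prop) :=
  exists2 d : R, 0 < d & forall h, vnorm h < d -> P h.

Lemma near0_and P Q : near0 P -> near0 Q -> near0 (fun h => P h /\ Q h).
Proof.
move=> [d1 d1_gt0 P1] [d2 d2_gt0 Q2]; have [d d_gt0 [d_le1 d_le2]] := common_pos_lb d1_gt0 d2_gt0.
by exists d => // h hd; split; [apply: P1 | apply: Q2]; exact: lt_le_trans hd _.
Qed.

Lemma near0_impl (P Q : 'cV[R]_m -> Prop) :
  (forall h, P h -> Q h) -> near0 P -> near0 Q.
Proof. by move=> PQ [d d_gt0 Pd]; exists d => // h /Pd /PQ. Qed.

Definition littleo r := forall e : R, 0 < e -> near0 (fun h => `|r h| <= e * vnorm h).
Definition vanishing r := forall e : R, 0 < e -> near0 (fun h => `|r h| <= e).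
Definition bounded_near0 r := exists2 c : R, 0 <= c & near0 (fun h => `|r h| <= c).

Lemma littleo_eq_near0 r s : near0 (fun h => r h = s h) -> littleo r -> littleo s.
Proof. by move=> rs ro e e_gt0; apply: near0_impl (near0_and rs (ro e e_gt0)) => h [<-]. Qed.

Lemma littleo0 : littleo (fun _ => 0).
Proof.
by move=> e e_gt0; exists 1 => // h _; rewrite normr0 mulr_ge0 ?vnorm_ge0 // ltW.
Qed.

Lemma littleoD r s : littleo r -> littleo s -> littleo (fun h => r h + s h).
Proof.
move=> ro so e e_gt0; have e2_gt0 : 0 < e / 2 by rewrite divr_gt0.
apply: near0_impl (near0_and (ro _ e2_gt0) (so _ e2_gt0)) => h [rh sh].
by apply: le_trans (ler_normD _ _) _; rewrite [e]splitr mulrDl lerD.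
Qed.

Lemma littleoZ c r : littleo r -> littleo (fun h => c * r h).
Proof.
move=> ro e e_gt0; have c1_gt0 : 0 < `|c| + 1 by rewrite ltr_wpDl.
apply: near0_impl (ro _ (divr_gt0 e_gt0 c1_gt0)) => h rh; rewrite normrM.
apply: le_trans (_ : (`|c| + 1) * (e / (`|c| + 1) * vnorm h) <= _).
  by apply: ler_pM => //; rewrite lerDl.
by rewrite mulrA mulrCA divff ?mulr1 // lt0r_neq0.
Qed.

Lemma littleoB r s : littleo r -> littleo s -> littleo (fun h => r h - s h).
Proof.
move=> ro so; apply: littleoD => //; apply: littleo_eq_near0 (littleoZ (-1) so).
by exists 1 => // h _; rewrite mulN1r.
Qed.

Lemma littleoM_bounded r s : littleo r -> bounded_near0 s -> littleo (fun h => r h * s h).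
Proof.
move=> ro [c c_ge0 sc] e e_gt0; have c1_gt0 : 0 < c + 1 by rewrite ltr_wpDl.
apply: near0_impl (near0_and (ro _ (divr_gt0 e_gt0 c1_gt0)) sc) => h [rh sh].
rewrite normrM; apply: (@le_trans _ _ ((e / (c + 1) * vnorm h) * (c + 1))).
  by apply: ler_pM => //; apply: (le_trans sh); rewrite lerDl.
by rewrite mulrAC divfK // lt0r_neq0.
Qed.

Lemma littleo_dotM_vanishing g s : vanishing s -> littleo (fun h => dot g h * s h).
Proof.
move=> s0 e e_gt0; have g1_gt0 : 0 < vnorm g + 1 by rewrite ltr_wpDl // vnorm_ge0.
apply: near0_impl (s0 _ (divr_gt0 e_gt0 g1_gt0)) => h sh; rewrite normrM.
apply: le_trans (_ : ((vnorm g + 1) * vnorm h) * (e / (vnorm g + 1)) <= _).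
  apply: ler_pM => //; apply: le_trans (ler_norm_dot _ _) _.
  by rewrite ler_wpM2r ?vnorm_ge0 // lerDl.
by rewrite mulrAC [_ * (e / _)]mulrC divfK // lt0r_neq0.
Qed.

Lemma littleo_vanishing r : littleo r -> vanishing r.
Proof.
move=> ro e e_gt0; have [d d_gt0 rd] := ro 1 ltr01.
have [d' d'_gt0 [d'_le_d d'_le_e]] := common_pos_lb d_gt0 e_gt0.
exists d' => // h hd'; apply: le_trans (rd _ (lt_le_trans hd' d'_le_d)) _.
by rewrite mul1r ltW // (lt_le_trans hd').
Qed.

Lemma vanishing_dot g : vanishing (fun h => dot g h).
Proof.
move=> e e_gt0; have g1_gt0 : 0 < vnorm g + 1 by rewrite ltr_wpDl // vnorm_ge0.
exists (e / (vnorm g + 1)); first by rewrite divr_gt0.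
move=> h hd; apply: le_trans (ler_norm_dot _ _) _.
apply: le_trans (_ : (vnorm g + 1) * vnorm h <= _).
  by rewrite ler_wpM2r ?vnorm_ge0 // lerDl.
by rewrite mulrC -ler_pdivlMr // ltW.
Qed.

Lemma vanishingD r s : vanishing r -> vanishing s -> vanishing (fun h => r h + s h).
Proof.
move=> r0 s0 e e_gt0; have e2_gt0 : 0 < e / 2 by rewrite divr_gt0.
apply: near0_impl (near0_and (r0 _ e2_gt0) (s0 _ e2_gt0)) => h [rh sh].
by apply: le_trans (ler_normD _ _) _; rewrite [e]splitr lerD.
Qed.

Lemma bounded_near0_addl c s : vanishing s -> bounded_near0 (fun h => c + s h).
Proof.
move=> s0; exists (`|c| + 1); first by rewrite addr_ge0.
apply: near0_impl (s0 1 ltr01) => h sh.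
by apply: le_trans (ler_normD _ _) _; rewrite lerD2l.
Qed.

End LittleO.

Section Gradient.
Variables (R : numFieldType) (n : nat).
Local Notation V := 'cV[R]_(n + n).
Implicit Types (f g : V -> R) (x h a b : V).

Lemma is_gradientE f x a :
  is_gradient f x a <-> littleo (fun h => f (x + h) - f x - dot a h).
Proof. by []. Qed.

Lemma eq0_small (c : R) : (forall e, 0 < e -> `|c| <= e) -> c = 0.
Proof.
move=> c_small; apply/eqP; apply: contraT => c_neq0.
have c_gt0 : 0 < `|c| by rewrite normr_gt0.
have := c_small (`|c| / 2) (divr_gt0 c_gt0 (ltr0Sn _ 1)).
by rewrite ler_pdivlMr // ger_pMr // => /le_lt_trans/(_ (ltr1n R 2)); rewrite ltxx.
Qed.

Lemma grad_unique f x a b : is_gradient f x a -> is_gradient f x b -> a = b.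
Proof.
move=> /is_gradientE fa /is_gradientE fb.
have ab_o : littleo (fun h : V => dot (a - b) h).
  apply: littleo_eq_near0 (littleoB fb fa); exists 1 => // h _.
  by rewrite dotDl dotNl; ring.
apply/matrixP => k j; rewrite (ord1 j); apply/eqP; rewrite -subr_eq0; apply/eqP.
rewrite (_ : a k 0 - b k 0 = (a - b) k 0); last by rewrite !mxE.
apply: eq0_small => e e_gt0; have [d d_gt0 abd] := ab_o e e_gt0.
have d2_gt0 : 0 < d / 2 by rewrite divr_gt0.
have := abd ((d / 2) *: delta_mx k 0).
rewrite vnormZ vnorm_delta mulr1 gtr0_norm // dotZr dot_deltar normrM gtr0_norm //.
rewrite ltr_pdivrMr // ltr_pMr // ltr1n => /(_ isT).
by rewrite mulrC ler_pM2r.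
Qed.

Lemma grad_vanishing f x a : is_gradient f x a -> vanishing (fun h => f (x + h) - f x).
Proof.
move=> fa e e_gt0; have := vanishingD (littleo_vanishing fa) (vanishing_dot a) e_gt0.
by apply: near0_impl => h; rewrite subrK.
Qed.

Lemma grad_near0 f f' x a :
  near0 (fun h : V => f (x + h) = f' (x + h)) -> is_gradient f x a -> is_gradient f' x a.
Proof.
move=> [d d_gt0 ff'] fa; have ff'x : f x = f' x by have := ff' 0; rewrite vnorm0 addr0 => ->.
by apply: littleo_eq_near0 fa; exists d => // h /ff' ->; rewrite ff'x.
Qed.

Lemma grad_eq f f' x a b : f =1 f' -> a = b -> is_gradient f x a -> is_gradient f' x b.
Proof. by move=> ff' <-; apply: grad_near0; exists 1 => // h _; exact: ff'. Qed.

Lemma grad_cst (c : R) x : is_gradient (fun _ => c) x 0.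
Proof.
by apply/is_gradientE; apply: littleo_eq_near0 (littleo0 _); exists 1 => // h _; rewrite dot0l; ring.
Qed.

Lemma grad_coord (k : 'I_(n + n)) x : is_gradient (fun z : V => z k 0) x (delta_mx k 0).
Proof.
apply/is_gradientE; apply: littleo_eq_near0 (littleo0 _); exists 1 => // h _.
by rewrite dot_deltal mxE; ring.
Qed.

Lemma gradD f g x a b : is_gradient f x a -> is_gradient g x b ->
  is_gradient (fun z => f z + g z) x (a + b).
Proof.
move=> /is_gradientE fa /is_gradientE gb; apply/is_gradientE.
by apply: littleo_eq_near0 (littleoD fa gb); exists 1 => // h _; rewrite dotDl; ring.
Qed.

Lemma gradZ (c : R) f x a : is_gradient f x a -> is_gradient (fun z => c * f z) x (c *: a).
Proof.
move=> /is_gradientE fa; apply/is_gradientE.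
by apply: littleo_eq_near0 (littleoZ c fa); exists 1 => // h _; rewrite dotZl; ring.
Qed.

Lemma grad_sum (I : Type) (r : seq I) (F : I -> V -> R) (G : I -> V) x :
  (forall i, is_gradient (F i) x (G i)) ->
  is_gradient (fun z => \sum_(i <- r) F i z) x (\sum_(i <- r) G i).
Proof.
move=> FG; elim: r => [|i r IH].
  by apply: grad_eq (grad_cst 0 x) => [z|]; rewrite big_nil.
by apply: grad_eq (gradD (FG i) IH) => [z|]; rewrite big_cons.
Qed.

Lemma gradM f g x a b : is_gradient f x a -> is_gradient g x b ->
  is_gradient (fun z => f z * g z) x (g x *: a + f x *: b).
Proof.
move=> fa gb; have g0 := grad_vanishing gb.
move/is_gradientE: fa => fa; move/is_gradientE: gb => gb.
have o1 := littleoM_bounded fa (bounded_near0_addl (g x) g0).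
have o2 := littleo_dotM_vanishing a g0.
have o3 := littleoZ (f x) gb.
apply/is_gradientE; apply: littleo_eq_near0 (littleoD (littleoD o1 o2) o3).
by exists 1 => // h _; rewrite dotDl !dotZl; ring.
Qed.

Lemma gradV g x b : is_gradient g x b -> g x != 0 ->
  is_gradient (fun z => (g z)^-1) x (- ((g x) ^- 2) *: b).
Proof.
move=> gb gx_neq0; have g0 := grad_vanishing gb; move/is_gradientE: gb => gb.
have gx_gt0 : 0 < `|g x| by rewrite normr_gt0.
have gx2_gt0 : 0 < `|g x| / 2 by rewrite divr_gt0.
have g_away0 : near0 (fun h : V => `|g x| / 2 <= `|g (x + h)|).
  apply: near0_impl (g0 _ gx2_gt0) => h gh.
  have : `|g x| - `|g x - g (x + h)| <= `|g (x + h)|.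
    by have := lerB_dist (g x) (g x - g (x + h)); rewrite (_ : g x - (g x - g (x + h)) = g (x + h)) //; ring.
  apply: le_trans; rewrite lerBrDl distrC; apply: (le_trans (lerD gh (lexx _))).
  by rewrite -splitr.
have inv_bounded k : 0 <= `|g x| ^- k ->
    bounded_near0 (fun h : V => (g x) ^- k * (g (x + h))^-1).
  move=> gk_ge0; exists (`|g x| ^- k * (`|g x| / 2)^-1); first by rewrite mulr_ge0 // invr_ge0 ltW.
  apply: near0_impl g_away0 => h gh; rewrite normrM !normfV normrX ler_wpM2l //.
  by rewrite lef_pV2 // ?posrE (lt_le_trans gx2_gt0).
have o1 := littleoM_bounded gb (inv_bounded 1%N _).
have o2 := littleoM_bounded (littleo_dotM_vanishing b g0) (inv_bounded 2%N _).
apply/is_gradientE; apply: littleo_eq_near0 (littleoB (o2 _) (o1 _)); last 2 first.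
- by rewrite invr_ge0 exprn_ge0.
- by rewrite invr_ge0 exprn_ge0.
apply: near0_impl g_away0 => h gh.
have gxh_neq0 : g (x + h) != 0 by rewrite -normr_gt0 (lt_le_trans gx2_gt0).
by rewrite dotZl; field; rewrite gxh_neq0 gx_neq0.
Qed.

Lemma grad_div f g x a b : is_gradient f x a -> is_gradient g x b -> g x != 0 ->
  is_gradient (fun z => f z / g z) x ((g x) ^- 2 *: (g x *: a - f x *: b)).
Proof.
move=> fa gb gx_neq0; apply: grad_eq (gradM fa (gradV gb gx_neq0)) => //.
Proof.
rewrite scalerBr !scalerA mulrN scaleNr; congr (_ *: _ - _ *: _); last exact: mulrC.
by rewrite expr2 invfM -mulrA mulVf ?mulr1.
Qed.

End Gradient.

Section MatrixDerivative.
Variables (R : numFieldType) (n : nat).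
Local Notation N := (n + n)%N.
Local Notation V := 'cV[R]_N.

(* [dF k] is the partial derivative of [F] at [x] along the [k]-th coordinate. *)
Definition is_mxderiv p q (F : V -> 'M[R]_(p, q)) (x : V) (dF : 'I_N -> 'M[R]_(p, q)) :=
  forall i j, is_gradient (fun z => F z i j) x (\col_k dF k i j).

Variables (p q : nat).
Implicit Types (F G : V -> 'M[R]_(p, q)) (dF dG : 'I_N -> 'M[R]_(p, q)).

Lemma mxderiv_unique F x dF dG : is_mxderiv F x dF -> is_mxderiv F x dG -> dF =1 dG.
Proof.
move=> FdF FdG k; apply/matrixP => i j.
by have /matrixP/(_ k 0) := grad_unique (FdF i j) (FdG i j); rewrite !mxE.
Qed.

Lemma mxderiv_near0 F G x dF dG : near0 (fun h : V => F (x + h) = G (x + h)) ->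
  dF =1 dG -> is_mxderiv F x dF -> is_mxderiv G x dG.
Proof.
move=> FG dFG FdF i j; have -> : \col_k dG k i j = \col_k dF k i j.
  by apply/matrixP => k l; rewrite !mxE dFG.
by apply: grad_near0 (FdF i j); apply: near0_impl FG => h ->.
Qed.

Lemma mxderiv_eq F G x dF dG : F =1 G -> dF =1 dG -> is_mxderiv F x dF -> is_mxderiv G x dG.
Proof. by move=> FG; apply: mxderiv_near0; exists 1 => // h _. Qed.

Lemma mxderiv_cst (M : 'M[R]_(p, q)) x : is_mxderiv (fun _ => M) x (fun _ => 0).
Proof.
by move=> i j; apply: grad_eq (grad_cst _ x) => //; apply/matrixP => k l; rewrite !mxE.
Qed.

Lemma mxderivD F G x dF dG : is_mxderiv F x dF -> is_mxderiv G x dG ->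
  is_mxderiv (fun z => F z + G z) x (fun k => dF k + dG k).
Proof.
move=> FdF GdG i j; apply: grad_eq (gradD (FdF i j) (GdG i j)) => [z|]; rewrite ?mxE //.
by apply/matrixP => k l; rewrite !mxE.
Qed.

Lemma mxderivZ (c : R) F x dF :
  is_mxderiv F x dF -> is_mxderiv (fun z => c *: F z) x (fun k => c *: dF k).
Proof.
move=> FdF i j; apply: grad_eq (gradZ c (FdF i j)) => [z|]; rewrite ?mxE //.
by apply/matrixP => k l; rewrite !mxE.
Qed.

Lemma mxderivB F G x dF dG : is_mxderiv F x dF -> is_mxderiv G x dG ->
  is_mxderiv (fun z => F z - G z) x (fun k => dF k - dG k).
Proof.
move=> FdF GdG; apply: mxderiv_eq (mxderivD FdF (mxderivZ (-1) GdG)) => ?;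
  by rewrite scaleN1r.
Qed.

Lemma mxderiv_tr F x dF :
  is_mxderiv F x dF -> is_mxderiv (fun z => (F z)^T) x (fun k => (dF k)^T).
Proof.
move=> FdF i j; apply: grad_eq (FdF j i) => [z|]; rewrite ?mxE //.
by apply/matrixP => k l; rewrite !mxE.
Qed.

Lemma mxderivM r F (G : V -> 'M[R]_(q, r)) x dF (dG : 'I_N -> 'M[R]_(q, r)) :
  is_mxderiv F x dF -> is_mxderiv G x dG ->
  is_mxderiv (fun z => F z *m G z) x (fun k => dF k *m G x + F x *m dG k).
Proof.
move=> FdF GdG i j.
apply: grad_eq (grad_sum (index_enum 'I_q) (fun l => gradM (FdF i l) (GdG l j))) => [z|].
  by rewrite mxE.
apply/matrixP => k c; rewrite !mxE summxE -big_split /=.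
by apply: eq_bigr => l _; rewrite !mxE; ring.
Qed.

Lemma mxderiv_linear (L : V -> 'M[R]_(p, q)) (M : 'I_N -> 'M[R]_(p, q)) x :
  (forall z, L z = \sum_k z k 0 *: M k) -> is_mxderiv L x M.
Proof.
move=> Lz i j.
apply: grad_eq (grad_sum (index_enum 'I_N) (fun k => gradZ (M k i j) (grad_coord k x))).
  by move=> z; rewrite Lz summxE; apply: eq_bigr => k _; rewrite !mxE mulrC.
apply/matrixP => k c; rewrite (ord1 c) !mxE summxE (bigD1 k) //= big1 ?addr0.
  by rewrite !mxE !eqxx mulr1.
by move=> l lk; rewrite !mxE eq_sym (negbTE lk) mulr0.
Qed.

End MatrixDerivative.

Lemma mxderiv_id (R : numFieldType) n (x : 'cV[R]_(n + n)) :
  is_mxderiv (fun z => z) x (fun k => delta_mx k 0).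
Proof.
move=> i j; rewrite (ord1 j); apply: grad_eq (grad_coord i x) => //.
by apply/matrixP => k l; rewrite !mxE (ord1 l) eq_sym.
Qed.

Section PolynomialDerivative.
Variables (R : numFieldType) (n : nat).
Local Notation N := (n + n)%N.
Local Notation V := 'cV[R]_N.
Local Notation MP := {mpoly R[N]}.

Definition coords (z : V) : 'I_N -> R := fun i => z i 0.

Definition has_meval_grad (P : MP) := forall x : V,
  is_gradient (fun z => P.@[coords z]) x (\col_k (mderiv k P).@[coords x]).

Lemma has_meval_gradC (c : R) : has_meval_grad c%:MP.
Proof.
move=> x; apply: grad_eq (grad_cst c x) => [z|]; first by rewrite mevalC.
by apply/matrixP => k l; rewrite !mxE mderivC meval0.
Qed.

Lemma has_meval_gradX (i : 'I_N) : has_meval_grad 'X_i.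
Proof.
move=> x; apply: grad_eq (grad_coord i x) => [z|]; first by rewrite mevalXU.
apply/matrixP => k l; rewrite (ord1 l) !mxE mderivX mnm1E.
have [<-|ik] /= := eqVneq i k; last by rewrite scale0r meval0.
have -> : (U_(i) - U_(i))%MM = 0%MM by apply/mnmP => j; rewrite mnmBE subnn mnm0E.
by rewrite mpolyX0 scale1r meval1.
Qed.

Lemma has_meval_gradD P Q : has_meval_grad P -> has_meval_grad Q -> has_meval_grad (P + Q).
Proof.
move=> PG QG x; apply: grad_eq (gradD (PG x) (QG x)) => [z|]; first by rewrite mevalD.
by apply/matrixP => k l; rewrite !mxE mderivD mevalD.
Qed.

Lemma has_meval_gradM P Q : has_meval_grad P -> has_meval_grad Q -> has_meval_grad (P * Q).
Proof.
move=> PG QG x; apply: grad_eq (gradM (PG x) (QG x)) => [z|]; first by rewrite mevalM.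
by apply/matrixP => k l; rewrite !mxE mderivM mevalD !mevalM; ring.
Qed.

Lemma has_meval_grad_prod (I : Type) (r : seq I) (F : I -> MP) :
  (forall i, has_meval_grad (F i)) -> has_meval_grad (\prod_(i <- r) F i).
Proof.
move=> FG; elim: r => [|a r IH]; first by rewrite big_nil -mpolyC1; exact: has_meval_gradC.
by rewrite big_cons; apply: has_meval_gradM.
Qed.

Lemma grad_meval P : has_meval_grad P.
Proof.
have gradXn i k : has_meval_grad ('X_i ^+ k).
  elim: k => [|k IH]; first by rewrite expr0 -mpolyC1; exact: has_meval_gradC.
  by rewrite exprS; apply: has_meval_gradM => //; exact: has_meval_gradX.
elim/mpolyind: P => [|c m P _ _ IH]; first by rewrite -mpolyC0; exact: has_meval_gradC.
apply: has_meval_gradD => //; rewrite -mul_mpolyC mpolyXE_id.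
by apply: has_meval_gradM; [exact: has_meval_gradC | exact: has_meval_grad_prod].
Qed.

Definition quot_mderiv (k : 'I_N) (P Q : MP) : MP := mderiv k P * Q - P * mderiv k Q.

Lemma grad_ratfun (P Q : MP) (x : V) : Q.@[coords x] != 0 ->
  is_gradient (fun z => P.@[coords z] / Q.@[coords z]) x
    (\col_k ((quot_mderiv k P Q).@[coords x] / (Q * Q).@[coords x])).
Proof.
move=> Qx_neq0; apply: grad_eq (grad_div (grad_meval P x) (grad_meval Q x) Qx_neq0) => //.
by apply/matrixP => k l; rewrite !mxE /quot_mderiv mevalB !mevalM; field.
Qed.

Lemma quot_mderiv_comm (P Q : MP) k l :
  quot_mderiv l (quot_mderiv k P Q) (Q * Q) = quot_mderiv k (quot_mderiv l P Q) (Q * Q).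
Proof. by rewrite /quot_mderiv !mderivB !mderivM (mderiv_comm k l P) (mderiv_comm k l Q); ring. Qed.

End PolynomialDerivative.

Section ShiftAlgebra.
Variables (R : numFieldType) (n : nat).
Hypothesis n_gt0 : (0 < n)%N.
Local Notation N := (n + n)%N.
Local Notation V := 'cV[R]_N.
Local Notation P := (Pshift R n).
Local Notation A := (Amat R n).

Lemma Jmat_is_linear : linear (@Jmat R n).
Proof.
move=> a u v; rewrite /Jmat.
have -> : Xmat (a *: u + v) = a *: Xmat u + Xmat v by apply/matrixP => i j; rewrite !mxE.
by rewrite scale_block_mx add_block_mx !scaler0 !addr0 scalerN opprD.
Qed.

HB.instance Definition _ :=
  GRing.isLinear.Build R V 'M[R]_N _ (@Jmat R n) Jmat_is_linear.

Lemma Jmat_sum_delta (z : V) : Jmat z = \sum_k z k 0 *: Jmat (delta_mx k 0).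
Proof.
rewrite {1}(matrix_sum_delta z) linear_sum; apply: eq_bigr => k _.
by rewrite big_ord1 linearZ.
Qed.

Lemma PshiftE (i j : 'I_n) : P i j = (j == ordS i)%:R.
Proof. by rewrite mxE. Qed.

Lemma sum_Pshift_col (F : 'I_n -> R) (j : 'I_n) : \sum_m P m j * F m = F (ord_pred j).
Proof.
rewrite (bigD1 (ord_pred j)) //= PshiftE ord_predK eqxx mul1r big1 ?addr0 // => m mj.
rewrite PshiftE; have [Ej|] := eqVneq j (ordS m); last by rewrite mul0r.
by case/eqP: mj; rewrite Ej ordSK.
Qed.

Lemma trPshift_mul_mxE q (M : 'M[R]_(n, q)) i j : (P^T *m M) i j = M (ord_pred i) j.
Proof.
by rewrite mxE -(sum_Pshift_col (fun m => M m j)); apply: eq_bigr => m _; rewrite mxE.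
Qed.

Lemma mul_Pshift_mxE q (M : 'M[R]_(q, n)) i j : (M *m P) i j = M i (ord_pred j).
Proof.
by rewrite mxE -(sum_Pshift_col (fun m => M i m)); apply: eq_bigr => m _; rewrite mulrC.
Qed.

Lemma val_ord_pred (i : 'I_n) : (ord_pred i : nat) = ((i + n.-1) %% n)%N.
Proof. by rewrite /= -!subn1 addnBA. Qed.

Lemma val_ord_addmod (i j : 'I_n) : (ord_addmod i j : nat) = ((i + j) %% n)%N.
Proof. by []. Qed.

Lemma ord_pred_addmod (i j : 'I_n) :
  ord_pred (ord_addmod i j) = ord_addmod (ord_pred i) j.
Proof. by apply: ord_inj; rewrite !(val_ord_pred, val_ord_addmod) !modnDml addnAC. Qed.

Lemma ord_addmod_pred (i j : 'I_n) :
  ord_addmod (ord_pred i) j = ord_addmod i (ord_pred j).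
Proof. by apply: ord_inj; rewrite !(val_ord_pred, val_ord_addmod) modnDml modnDmr addnAC addnA. Qed.

Lemma trmx_Xmat (z : V) : (Xmat z)^T = Xmat z.
Proof.
apply/matrixP => i j; rewrite !mxE; congr (z _ 0); congr (lshift _ _).
by apply: val_inj; rewrite /= addnC.
Qed.

Lemma trmx_Jmat (z : V) : (Jmat z)^T = - Jmat z.
Proof.
by rewrite /Jmat tr_block_mx !trmx0 linearN /= trmx_Xmat opp_block_mx !oppr0 opprK.
Qed.

Lemma trmx_Amat : A^T = block_mx P^T 0 0 P^T.
Proof. by rewrite /Amat tr_block_mx !trmx0. Qed.

Lemma Jmat_trAmx (z : V) : Jmat (A^T *m z) = A^T *m Jmat z.
Proof.
have XA : Xmat (A^T *m z) = P^T *m Xmat z.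
  apply/matrixP => i j; rewrite trPshift_mul_mxE [LHS]mxE.
  rewrite trmx_Amat -{1}(vsubmxK z) mul_block_col col_mxEu mul0mx addr0.
  by rewrite trPshift_mul_mxE !mxE ord_pred_addmod.
by rewrite /Jmat XA trmx_Amat mulmx_block !mul0mx !mulmx0 !add0r !addr0 mulmxN.
Qed.

Lemma trAmx_Jmat (z : V) : A^T *m Jmat z = Jmat z *m A.
Proof.
have PX : P^T *m Xmat z = Xmat z *m P.
  by apply/matrixP => i j; rewrite trPshift_mul_mxE mul_Pshift_mxE !mxE ord_addmod_pred.
rewrite /Jmat trmx_Amat /Amat !mulmx_block.
by rewrite !mul0mx !mulmx0 !add0r !addr0 mulmxN mulNmx PX.
Qed.

End ShiftAlgebra.

Section RationalHessian.
Variables (R : numFieldType) (n : nat).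
Local Notation N := (n + n)%N.
Local Notation V := 'cV[R]_N.
Local Notation MP := {mpoly R[N]}.

Lemma near0_nested (P : V -> Prop) :
  near0 P -> near0 (fun h => near0 (fun k => P (h + k))).
Proof.
move=> [d d_gt0 Pd]; have d2_gt0 : 0 < d / 2 by rewrite divr_gt0.
exists (d / 2) => // h hd; exists (d / 2) => // k kd; apply: Pd.
by apply: le_lt_trans (vnormD _ _) _; rewrite [d]splitr ltrD.
Qed.

Lemma grad_neq0_near0 (f : V -> R) x a : is_gradient f x a -> f x != 0 ->
  near0 (fun h => f (x + h) != 0).
Proof.
move=> fa fx_neq0; have fx2_gt0 : 0 < `|f x| / 2 by rewrite divr_gt0 ?normr_gt0.
apply: near0_impl (grad_vanishing fa fx2_gt0) => h fh; apply/eqP => fxh0.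
move: fh; rewrite fxh0 sub0r normrN ler_pdivlMr // ger_pMr ?normr_gt0 //.
by move=> /le_lt_trans/(_ (ltr1n R 2)); rewrite ltxx.
Qed.

Lemma meval_neq0_near0 (P : MP) (x : V) : P.@[coords x] != 0 ->
  near0 (fun h => P.@[coords (x + h)] != 0).
Proof. exact: grad_neq0_near0 (grad_meval P x). Qed.

Definition mxnorm (C : 'M[R]_N) : R := \sum_i \sum_j `|C i j|.

Lemma vnorm_mulmx (C : 'M[R]_N) (v : V) : vnorm (C *m v) <= mxnorm C * vnorm v.
Proof.
rewrite /vnorm /mxnorm mulr_suml; apply: ler_sum => i _; rewrite mxE mulr_suml.
apply: le_trans (ler_norm_sum _ _ _) _; apply: ler_sum => j _.
by rewrite normrM ler_wpM2l // ler_coord_vnorm.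
Qed.

Lemma mxnorm_ge0 C : 0 <= mxnorm C.
Proof. by rewrite /mxnorm sumr_ge0 // => i _; rewrite sumr_ge0. Qed.

Definition is_jacobian (G : V -> V) (x : V) (M : 'M[R]_N) :=
  forall e : R, 0 < e -> exists2 d : R, 0 < d &
    forall h : V, vnorm h < d -> vnorm (G (x + h) - G x - M *m h) <= e * vnorm h.

Lemma is_hessianP (f : V -> R) x M : is_hessian f x M <->
  exists G, near0 (fun h => is_gradient f (x + h) (G (x + h))) /\ is_jacobian G x M.
Proof.
split=> [[d d_gt0 [G [fG GM]]]|[G [[d d_gt0 fG] GM]]].
  by exists G; split=> //; exists d => // h hd; apply: fG; rewrite addrC addKr.
by exists d => //; exists G; split=> // y yd; have := fG _ yd; rewrite addrC subrK.
Qed.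

Lemma is_hessian_eq (f g : V -> R) x M : f =1 g -> is_hessian f x M -> is_hessian g x M.
Proof.
move=> fg [d d_gt0 [G [fG GM]]]; exists d => //; exists G; split=> // y /fG.
exact: grad_eq.
Qed.

Lemma is_jacobian_lmul (C : 'M[R]_N) G x M :
  is_jacobian G x M -> is_jacobian (fun z => C *m G z) x (C *m M).
Proof.
move=> GM e e_gt0; have c1_gt0 : 0 < mxnorm C + 1 by rewrite ltr_wpDl ?mxnorm_ge0.
have [d d_gt0 Gd] := GM (e / (mxnorm C + 1)) (divr_gt0 e_gt0 c1_gt0).
exists d => // h /Gd Gh; rewrite -mulmxA -!mulmxBr.
apply: le_trans (vnorm_mulmx _ _) _.
apply: le_trans (_ : (mxnorm C + 1) * (e / (mxnorm C + 1) * vnorm h) <= _).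
  by apply: ler_pM; rewrite ?mxnorm_ge0 ?vnorm_ge0 ?lerDl.
by rewrite mulrCA mulrA divfK ?lt0r_neq0.
Qed.

Lemma is_jacobian_row G x M (k : 'I_N) :
  is_jacobian G x M -> is_gradient (fun z => G z k 0) x (\col_l M k l).
Proof.
move=> GM e e_gt0; have [d d_gt0 Gd] := GM e e_gt0.
exists d => // h /Gd; apply: le_trans.
have -> : G (x + h) k 0 - G x k 0 - dot (\col_l M k l) h = (G (x + h) - G x - M *m h) k 0.
  by rewrite !mxE dotE; congr (_ - _); apply: eq_bigr => l _; rewrite mxE.
exact: ler_coord_vnorm.
Qed.

Lemma is_hessian_lmul (f g : V -> R) x (C M : 'M[R]_N) :
  near0 (fun h => forall a, is_gradient f (x + h) a -> is_gradient g (x + h) (C *m a)) ->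
  is_hessian f x M -> is_hessian g x (C *m M).
Proof.
move=> fg /is_hessianP[G [fG GM]]; apply/is_hessianP.
exists (fun z => C *m G z); split; last exact: is_jacobian_lmul.
by apply: near0_impl (near0_and fg fG) => h [fgh /fgh].
Qed.

(* Schwarz's theorem for rational functions: both second partial derivatives are
   read off the same polynomial expression, by uniqueness of gradients. *)
Lemma hessian_ratfun_sym (P Q : MP) (f : V -> R) x M : Q.@[coords x] != 0 ->
  near0 (fun h => f (x + h) = P.@[coords (x + h)] / Q.@[coords (x + h)]) ->
  is_hessian f x M -> M^T = M.
Proof.
move=> Qx_neq0 fPQ /is_hessianP[G [fG GM]].
pose Gr (y : V) := \col_k ((quot_mderiv k P Q).@[coords y] / (Q * Q).@[coords y]).
have GGr : near0 (fun h => G (x + h) = Gr (x + h)).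
  have fPQ_near := near0_nested (near0_and fPQ (meval_neq0_near0 Qx_neq0)).
  apply: near0_impl (near0_and fPQ_near fG) => h [fPQh fGh].
  have [d d_gt0 /(_ 0)] := fPQh; rewrite vnorm0 addr0 => /(_ d_gt0) [_ Qxh_neq0].
  apply: grad_unique (grad_ratfun P Qxh_neq0); apply: grad_near0 fGh.
  by apply: near0_impl fPQh => k [fk _]; rewrite -addrA.
have QQx_neq0 : (Q * Q).@[coords x] != 0 by rewrite mevalM mulf_neq0.
have ME k l : M k l = (quot_mderiv l (quot_mderiv k P Q) (Q * Q)).@[coords x]
                      / ((Q * Q) * (Q * Q)).@[coords x].
  have Gk : is_gradient (fun z => (quot_mderiv k P Q).@[coords z] / (Q * Q).@[coords z]) x
              (\col_l M k l).
    apply: grad_near0 (is_jacobian_row k GM).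
    by apply: near0_impl GGr => h ->; rewrite mxE.
  by have /matrixP/(_ l 0) := grad_unique Gk (grad_ratfun _ QQx_neq0); rewrite !mxE.
by apply/matrixP => k l; rewrite mxE !ME quot_mderiv_comm.
Qed.

End RationalHessian.

Section RationalRepresentation.
Variables (R : numFieldType) (n : nat).
Local Notation N := (n + n)%N.
Local Notation V := 'cV[R]_N.
Local Notation MP := {mpoly R[N]}.
Variables (H : 'M[R]_N) (eps : R).
Local Notation D z := (Dmat H z eps).

(* [tildeFC C] is [tildeF (C *m H)] with the matrix [D] of [H]; the two agree when
   [Dmat (C *m H) = Dmat H]. *)
Definition tildeFC (C : 'M[R]_N) (z : V) : R := (z^T *m (C *m H) *m invmx (D z) *m z) 0 0.

Definition Dsolve (z : V) : V := invmx (D z) *m z.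

Definition cmx p q (M : 'M[R]_(p, q)) : 'M[MP]_(p, q) := map_mx (fun c => c%:MP) M.
Definition Xcol : 'cV[MP]_N := \col_i 'X_i.
Definition Xpoly : 'M[MP]_n := \matrix_(i, j) 'X_(lshift n (ord_addmod i j)).
Definition Jpoly : 'M[MP]_N := block_mx 0 Xpoly (- Xpoly) 0.
Definition Dpoly : 'M[MP]_N :=
  1%:M - (eps ^+ 2)%:MP *: (Jpoly *m cmx H *m (Jpoly *m cmx H)).
Definition Qpoly : MP := \det Dpoly.
Definition Vpoly : 'cV[MP]_N := \adj Dpoly *m Xcol.
Definition Fpoly (C : 'M[R]_N) : MP := (Xcol^T *m cmx (C *m H) *m Vpoly) 0 0.

Local Notation evmx z := (map_mx (meval (coords z))).

Lemma meval_cmx (z : V) p q (M : 'M[R]_(p, q)) : evmx z (cmx M) = M.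
Proof. by apply/matrixP => i j; rewrite !mxE mevalC. Qed.

Lemma meval_Xcol (z : V) : evmx z Xcol = z.
Proof. by apply/matrixP => i j; rewrite !mxE mevalXU (ord1 j). Qed.

Lemma meval_Jpoly (z : V) : evmx z Jpoly = Jmat z.
Proof.
rewrite /Jpoly map_block_mx !map_mx0 map_mxN /Jmat.
have -> // : evmx z Xpoly = Xmat z by apply/matrixP => i j; rewrite !mxE mevalXU.
Qed.

Lemma meval_Dpoly (z : V) : evmx z Dpoly = D z.
Proof.
by rewrite map_mxB map_mx1 map_mxZ !map_mxM meval_Jpoly meval_cmx /= mevalC.
Qed.

Lemma meval_Qpoly (z : V) : Qpoly.@[coords z] = \det (D z).
Proof. by rewrite -det_map_mx meval_Dpoly. Qed.

Lemma meval_Vpoly (z : V) : evmx z Vpoly = \adj (D z) *m z.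
Proof. by rewrite map_mxM map_mx_adj meval_Dpoly meval_Xcol. Qed.

Lemma invmx_Dmat (z : V) : \det (D z) != 0 -> invmx (D z) = (Qpoly.@[coords z])^-1 *: \adj (D z).
Proof. by move=> detD_neq0; rewrite /invmx unitmxE unitfE detD_neq0 meval_Qpoly. Qed.

Lemma Dsolve_ratfun (z : V) j : \det (D z) != 0 ->
  Dsolve z j 0 = (Vpoly j 0).@[coords z] / Qpoly.@[coords z].
Proof.
move=> detD_neq0; rewrite /Dsolve invmx_Dmat // -scalemxAl mxE mulrC.
by rewrite -meval_Vpoly mxE.
Qed.

Lemma tildeFC_ratfun (C : 'M[R]_N) (z : V) : \det (D z) != 0 ->
  tildeFC C z = (Fpoly C).@[coords z] / Qpoly.@[coords z].
Proof.
move=> detD_neq0.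
have -> : (Fpoly C).@[coords z] = (evmx z (Xcol^T *m cmx (C *m H) *m Vpoly)) 0 0.
  by rewrite mxE.
rewrite map_mxM meval_Vpoly map_mxM meval_cmx -map_trmx meval_Xcol.
by rewrite /tildeFC invmx_Dmat // -scalemxAr -mulmxA -scalemxAl mxE mulrC !mulmxA.
Qed.

End RationalRepresentation.

Section DerivativeOfDsolve.
Variables (R : numFieldType) (n : nat).
Local Notation N := (n + n)%N.
Local Notation V := 'cV[R]_N.
Variables (H : 'M[R]_N) (eps : R).
Local Notation D z := (Dmat H z eps).

(* The directional derivative of [D] at [y] along [w]. *)
Definition dDmat (y w : V) : 'M[R]_N :=
  - (eps ^+ 2 *: (Jmat w *m H *m (Jmat y *m H) + Jmat y *m H *m (Jmat w *m H))).

Lemma dDmat_is_linear y : linear (dDmat y).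
Proof.
move=> a u v; rewrite /dDmat; set M := Jmat y *m H.
have -> : Jmat (a *: u + v) *m H *m M + M *m (Jmat (a *: u + v) *m H)
    = a *: (Jmat u *m H *m M + M *m (Jmat u *m H)) + (Jmat v *m H *m M + M *m (Jmat v *m H)).
  by rewrite linearP /= !mulmxDl !mulmxDr -!scalemxAl -!scalemxAr scalerDr addrACA.
by rewrite scalerDr opprD !scalerN !scalerA mulrC.
Qed.

HB.instance Definition _ y :=
  GRing.isLinear.Build R V 'M[R]_N _ (dDmat y) (dDmat_is_linear y).

Definition dDsolve (y : V) (k : 'I_N) : V :=
  invmx (D y) *m (delta_mx k 0 - dDmat y (delta_mx k 0) *m Dsolve H eps y).

Lemma mxderiv_Dmat y : is_mxderiv (fun z => D z) y (fun k => dDmat y (delta_mx k 0)).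
Proof.
have dJ := mxderivM (mxderiv_linear y (@Jmat_sum_delta R n)) (mxderiv_cst H y).
apply: mxderiv_eq (mxderivB (mxderiv_cst 1%:M y) (mxderivZ (eps ^+ 2) (mxderivM dJ dJ))) => // k.
by rewrite /dDmat !mulmx0 !addr0 sub0r.
Qed.

Lemma mxderiv_Dsolve y : \det (D y) != 0 -> is_mxderiv (Dsolve H eps) y (dDsolve y).
Proof.
move=> detD_neq0; have Qy_neq0 : (Qpoly H eps).@[coords y] != 0 by rewrite meval_Qpoly.
have near_y := meval_neq0_near0 Qy_neq0.
pose dV k : V := \col_j ((quot_mderiv k (Vpoly H eps j 0) (Qpoly H eps)).@[coords y]
                          / (Qpoly H eps * Qpoly H eps).@[coords y]).
have dVy : is_mxderiv (Dsolve H eps) y dV.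
  move=> j c; rewrite (ord1 c).
  have -> : \col_k dV k j 0 = \col_k ((quot_mderiv k (Vpoly H eps j 0) (Qpoly H eps)).@[coords y]
                          / (Qpoly H eps * Qpoly H eps).@[coords y]).
    by apply/matrixP => k l; rewrite !mxE.
  apply: grad_near0 (grad_ratfun _ Qy_neq0).
  apply: near0_impl near_y => h Qh.
  by rewrite Dsolve_ratfun -?meval_Qpoly.
have DdV : (fun k => dDmat y (delta_mx k 0) *m Dsolve H eps y + D y *m dV k)
             =1 (fun k => delta_mx k 0).
  apply: (mxderiv_unique _ (mxderiv_id y)).
  apply: mxderiv_near0 (mxderivM (mxderiv_Dmat y) dVy) => //.
  apply: near0_impl near_y => h; rewrite meval_Qpoly => detDh_neq0.
  by rewrite /Dsolve mulKVmx // unitmxE unitfE.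
apply: (mxderiv_eq _ _ dVy) => [z //|k].
by rewrite /dDsolve -{1}(DdV k) /= addrC addKr mulKmx // unitmxE unitfE.
Qed.

Lemma grad_tildeFC (C : 'M[R]_N) y : \det (D y) != 0 ->
  is_gradient (tildeFC H eps C) y
    (\col_k (dot (delta_mx k 0) (C *m H *m Dsolve H eps y) + dot y (C *m H *m dDsolve y k))).
Proof.
move=> detD_neq0.
have dF := mxderivM (mxderivM (mxderiv_tr (mxderiv_id y)) (mxderiv_cst (C *m H) y))
                    (mxderiv_Dsolve detD_neq0).
apply: grad_eq (dF 0 0).
  by move=> z; rewrite /tildeFC /Dsolve !mulmxA.
apply/matrixP => k l.
by rewrite [LHS]mxE mulmx0 addr0 [RHS]mxE [LHS]mxE /dot !mulmxA.
Qed.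

End DerivativeOfDsolve.

Section Compatibility.
Variables (R : numFieldType) (n : nat).
Local Notation N := (n + n)%N.
Local Notation V := 'cV[R]_N.
Variable H : 'M[R]_N.
Hypothesis Hsym : H^T = H.
Variable eps : R.
Local Notation D z := (Dmat H z eps).
Local Notation Dsolve := (Dsolve H eps).

Definition Jcompatible (C : 'M[R]_N) :=
  [/\ C *m H = H *m C^T, forall z : V, C^T *m Jmat z = Jmat z *m C
    & forall z : V, Jmat (C^T *m z) = C^T *m Jmat z].

Lemma Jcompatible0 : Jcompatible 0.
Proof. by split=> [|z|z]; rewrite ?trmx0 ?mul0mx ?mulmx0 ?linear0. Qed.

Lemma Jcompatible1 : Jcompatible 1%:M.
Proof. by split=> [|z|z]; rewrite ?trmx1 ?mul1mx ?mulmx1. Qed.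

Lemma JcompatibleD C1 C2 : Jcompatible C1 -> Jcompatible C2 -> Jcompatible (C1 + C2).
Proof.
move=> [HC1 JC1 JzC1] [HC2 JC2 JzC2]; split=> [|z|z]; rewrite [(_ + _)^T]linearD /= mulmxDl.
- by rewrite mulmxDr HC1 HC2.
- by rewrite mulmxDr JC1 JC2.
- by rewrite [Jmat _]linearD /= JzC1 JzC2 mulmxDl.
Qed.

Lemma JcompatibleZ (c : R) C : Jcompatible C -> Jcompatible (c *: C).
Proof.
move=> [HC JC JzC]; split=> [|z|z]; rewrite [(_ *: _)^T]linearZ /= -!scalemxAl.
- by rewrite HC scalemxAr.
- by rewrite JC scalemxAr.
- by rewrite [Jmat _]linearZ /= JzC.
Qed.

Lemma JcompatibleM C1 C2 : Jcompatible C1 -> Jcompatible C2 -> C1 *m C2 = C2 *m C1 ->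
  Jcompatible (C1 *m C2).
Proof.
move=> [HC1 JC1 JzC1] [HC2 JC2 JzC2] C12; split=> [|z|z]; rewrite trmx_mul.
- by rewrite -mulmxA HC2 mulmxA HC1 -mulmxA -!trmx_mul C12.
- by rewrite -mulmxA JC1 mulmxA JC2 -mulmxA C12.
- by rewrite -mulmxA JzC2 JzC1 mulmxA.
Qed.

Lemma Jcompatible_sum (I : Type) (r : seq I) (F : I -> 'M[R]_N) :
  (forall i, Jcompatible (F i)) -> Jcompatible (\sum_(i <- r) F i).
Proof.
move=> FC; elim: r => [|i r IH]; first by rewrite big_nil; exact: Jcompatible0.
by rewrite big_cons; apply: JcompatibleD.
Qed.

Lemma trmx_CH C : Jcompatible C -> (C *m H)^T = C *m H.
Proof. by case=> HC _ _; rewrite trmx_mul Hsym HC. Qed.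

Lemma trmx_Dmat (z : V) : (D z)^T = 1%:M - eps ^+ 2 *: (H *m Jmat z *m (H *m Jmat z)).
Proof.
rewrite /Dmat linearB /= trmx1 linearZ /= !trmx_mul trmx_Jmat Hsym.
by rewrite !mulmxN !mulNmx opprK !mulmxA.
Qed.

Lemma mul_CH_Dmat C (z : V) : Jcompatible C -> C *m H *m D z = (D z)^T *m (C *m H).
Proof.
case=> HC JC _.
have W : C *m H *m (Jmat z *m H *m (Jmat z *m H)) = H *m Jmat z *m (H *m Jmat z) *m (C *m H).
  rewrite !mulmxA HC -(mulmxA H) JC !mulmxA -(mulmxA _ C) HC !mulmxA.
  by rewrite -(mulmxA _ C^T) JC !mulmxA.
by rewrite trmx_Dmat /Dmat mulmxBr mulmxBl mulmx1 mul1mx -!scalemxAr -!scalemxAl W.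
Qed.

Lemma trmx_mul_CH_Dsolve C (y : V) : Jcompatible C -> D y \in unitmx ->
  (C *m H *m Dsolve y)^T = y^T *m (C *m H) *m invmx (D y).
Proof.
move=> CC Dy_unit; have DTy_unit : (D y)^T \in unitmx by rewrite unitmx_tr.
rewrite /Dsolve trmx_mul trmx_CH // trmx_mul trmx_inv -[LHS]mulmxA -[RHS]mulmxA.
congr (_ *m _); apply: (canRL (mulmxK Dy_unit)); rewrite -mulmxA mul_CH_Dmat //.
by rewrite mulKmx.
Qed.

Lemma trmx_dDmat C (y w : V) : Jcompatible C ->
  C^T *m dDmat H eps y w = dDmat H eps y (C^T *m w).
Proof.
move=> [HC JC JzC]; rewrite /dDmat mulmxN -scalemxAr mulmxDr JzC !mulmxA (JC y).
by rewrite -(mulmxA _ C) HC !mulmxA.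
Qed.

Definition gradFC (C : 'M[R]_N) (y : V) : V :=
  2%:R *: (C *m H *m Dsolve y)
  - \col_k dot (C *m H *m Dsolve y) (dDmat H eps y (delta_mx k 0) *m Dsolve y).

Lemma grad_tildeFC_compatible C y : Jcompatible C -> D y \in unitmx ->
  is_gradient (tildeFC H eps C) y (gradFC C y).
Proof.
move=> CC Dy_unit; have detD_neq0 : \det (D y) != 0 by rewrite -unitfE -unitmxE.
apply: grad_eq (grad_tildeFC C detD_neq0) => [z //|]; apply/matrixP => k l; rewrite [LHS]mxE.
have -> : dot y (C *m H *m dDsolve H eps y k)
    = dot (C *m H *m Dsolve y) (delta_mx k 0 - dDmat H eps y (delta_mx k 0) *m Dsolve y).
  by rewrite /dot /dDsolve (trmx_mul_CH_Dsolve CC Dy_unit) !mulmxA.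
rewrite /gradFC; set v := C *m H *m Dsolve y; clearbody v.
by rewrite !mxE dotBr dot_deltal dot_deltar (ord1 l); ring.
Qed.

Lemma trmx_delta_sum (C : 'M[R]_N) (k : 'I_N) :
  C^T *m delta_mx k 0 = \sum_l C k l *: (delta_mx l 0 : V).
Proof.
rewrite [LHS]matrix_sum_delta; apply: eq_bigr => l _; rewrite big_ord1; congr (_ *: _).
rewrite mxE (bigD1 k) //= big1 ?addr0 => [|j jk]; rewrite !mxE ?eqxx ?mulr1 //.
by rewrite (negbTE jk) mulr0.
Qed.

Lemma gradFC_lmul C y : Jcompatible C -> gradFC C y = C *m gradFC 1%:M y.
Proof.
move=> CC; rewrite /gradFC mul1mx; set V := Dsolve y; clearbody V.
rewrite mulmxBr -scalemxAr mulmxA; congr (_ - _).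
apply/matrixP => k l; rewrite (ord1 l) [LHS]mxE [RHS]mxE.
under [RHS]eq_bigr do rewrite mxE.
rewrite -mulmxA dot_mulmxl mulmxA (trmx_dDmat _ _ CC) trmx_delta_sum linear_sum /=.
rewrite mulmx_suml dot_sumr; apply: eq_bigr => j _.
by rewrite linearZ /= -scalemxAl dotZr.
Qed.

End Compatibility.

Section HessianCommutation.
Variables (R : numFieldType) (n : nat).
Local Notation N := (n + n)%N.
Local Notation V := 'cV[R]_N.
Variable H : 'M[R]_N.
Hypothesis Hsym : H^T = H.
Variable eps : R.
Local Notation D z := (Dmat H z eps).

Lemma Dmat_lmul C (z : V) : Jcompatible H C -> C *m C = 1%:M -> Dmat (C *m H) z eps = D z.
Proof.
move=> [HC JC _] CC1; rewrite /Dmat; congr (_ - _ *: _).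
rewrite HC !mulmxA -(mulmxA _ C^T) JC !mulmxA -(mulmxA _ C) HC !mulmxA.
by rewrite -(mulmxA _ C^T) -trmx_mul CC1 trmx1 mulmx1.
Qed.

Lemma grad_tildeFC_lmul C T (y a : V) : Jcompatible H C -> Jcompatible H (T *m C) ->
  D y \in unitmx -> is_gradient (tildeFC H eps C) y a ->
  is_gradient (tildeFC H eps (T *m C)) y (T *m a).
Proof.
move=> CC TCC Dy_unit /grad_unique/(_ (grad_tildeFC_compatible Hsym CC Dy_unit)) ->.
apply: (grad_eq _ _ (grad_tildeFC_compatible Hsym TCC Dy_unit)) => [z //|].
by rewrite (gradFC_lmul _ _ CC) (gradFC_lmul _ _ TCC) mulmxA.
Qed.

Lemma hessian_tildeFC_lmul C T x M : Jcompatible H C -> Jcompatible H (T *m C) ->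
  D x \in unitmx -> is_hessian (tildeFC H eps C) x M -> T *m M = M *m T^T.
Proof.
move=> CC TCC Dx_unit HM.
have Qx_neq0 : (Qpoly H eps).@[coords x] != 0 by rewrite meval_Qpoly -unitfE -unitmxE.
have near_x := meval_neq0_near0 Qx_neq0.
have ratfun C' : near0 (fun h => tildeFC H eps C' (x + h)
    = (Fpoly H eps C').@[coords (x + h)] / (Qpoly H eps).@[coords (x + h)]).
  by apply: near0_impl near_x => h Qh; rewrite tildeFC_ratfun -?meval_Qpoly.
have Msym := hessian_ratfun_sym Qx_neq0 (ratfun C) HM.
have HTM : is_hessian (tildeFC H eps (T *m C)) x (T *m M).
  apply: is_hessian_lmul HM; apply: near0_impl near_x => h Qh a.
  by apply: grad_tildeFC_lmul; rewrite // unitmxE unitfE -meval_Qpoly.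
by rewrite -(hessian_ratfun_sym Qx_neq0 (ratfun _) HTM) trmx_mul Msym.
Qed.

End HessianCommutation.

Section ShiftPolynomials.
Variables (R : numFieldType) (n : nat).
Hypothesis n_gt0 : (0 < n)%N.
Local Notation A := (Amat R n).
Variable H : 'M[R]_(n + n).
Hypothesis Hadm : A *m H = H *m A^T.

Lemma Jcompatible_expA i : Jcompatible H (A ^+ i).
Proof.
have AC : Jcompatible H A by split=> // z; [exact: trAmx_Jmat | exact: Jmat_trAmx].
elim: i => [|i IH]; first exact: Jcompatible1.
by rewrite exprS -mulmxE; apply: JcompatibleM; rewrite // !mulmxE -exprS -exprSr.
Qed.

Lemma Jcompatible_polyA k (alpha : 'I_k -> R) :
  Jcompatible H (\sum_(i < k) alpha i *: A ^+ i).
Proof. by apply: Jcompatible_sum => i; apply: JcompatibleZ; exact: Jcompatible_expA. Qed.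

Lemma Jcompatible_mulA_polyA k (alpha : 'I_k -> R) :
  Jcompatible H (A *m \sum_(i < k) alpha i *: A ^+ i).
Proof.
rewrite mulmx_sumr; apply: Jcompatible_sum => i.
by rewrite -scalemxAr; apply: JcompatibleZ; rewrite mulmxE -exprS; exact: Jcompatible_expA.
Qed.

End ShiftPolynomials.

Theorem mainTheorem4 (R : numFieldType) (n : nat) (Hn : (2 <= n)%N)
  (H : 'M[R]_(n + n)) (alpha : 'I_n -> R)
  (Hsym : H^T = H)
  (Hadm : Amat R n *m H = H *m (Amat R n)^T)
  (B : 'M[R]_(n + n))
  (HB : B = \sum_(i < n) alpha i *: (Amat R n) ^+ i)
  (HB2 : B *m B = 1%:M)
  (eps : R) (x : 'cV[R]_(n + n)) :
  let K := B *m H in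
  ((Dmat H x eps \in unitmx) -> (Dmat K x eps \in unitmx) ->
     exists gH : 'cV[R]_(n + n),
       is_gradient (tildeF H eps) x gH /\ is_gradient (tildeF K eps) x (B *m gH))
  /\
  ((Dmat H x eps \in unitmx) -> forall M : 'M[R]_(n + n),
     is_hessian (tildeF H eps) x M -> Amat R n *m M = M *m (Amat R n)^T)
  /\
  ((Dmat K x eps \in unitmx) -> forall M : 'M[R]_(n + n),
     is_hessian (tildeF K eps) x M -> Amat R n *m M = M *m (Amat R n)^T).
Proof.
move=> K; have n_gt0 : (0 < n)%N by apply: leq_trans Hn.
have BC : Jcompatible H B by rewrite HB; exact: Jcompatible_polyA.
have ABC : Jcompatible H (Amat R n *m B) by rewrite HB; exact: Jcompatible_mulA_polyA.
have A1C : Jcompatible H (Amat R n *m 1%:M).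
  by rewrite mulmx1 -[Amat R n]expr1; exact: Jcompatible_expA.
have DK z : Dmat K z eps = Dmat H z eps by exact: Dmat_lmul.
have FH : tildeF H eps =1 tildeFC H eps 1%:M by move=> z; rewrite /tildeFC mul1mx.
have FK : tildeF K eps =1 tildeFC H eps B by move=> z; rewrite /tildeF DK.
split; [|split].
- move=> DH_unit _; exists (gradFC H eps 1%:M x); split.
    exact: grad_eq (fsym FH) _ (grad_tildeFC_compatible Hsym (Jcompatible1 H) DH_unit).
  exact: grad_eq (fsym FK) (gradFC_lmul eps x BC) (grad_tildeFC_compatible Hsym BC DH_unit).
- move=> DH_unit M /(is_hessian_eq FH) HM.
  exact (hessian_tildeFC_lmul Hsym (Jcompatible1 H) A1C DH_unit HM).
- rewrite DK => DH_unit M /(is_hessian_eq FK) HM.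
  exact (hessian_tildeFC_lmul Hsym BC ABC DH_unit HM).
Qed.
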